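(* Let $\mathbf L$ be a coatomic algebraic lattice and let $\eta$ be an equa-interior operator on $\mathbf L$ satisfying \[ (\dagger)\qquad \tau(x)\le\tau(c)\ \&\ \eta(z)\le c\ \implies\ \eta(\eta(z)\vee\tau(x\wedge z))\le c \quad\text{for all }x,z,c\in L. \] Then $\mathbf L$ is bicoatomic.
   Context: An equa-interior operator on an algebraic lattice $\mathbf L$ is a map $\eta:L\to L$ such that for all $x,y,z\in L$: (I1) $\eta(x)\le x$; (I2) $x\ge y$ implies $\eta(x)\ge\eta(y)$; (I3) $\eta^2(x)=\eta(x)$; (I4) $\eta(1)=1$; (I5) if $\eta(x)=u$ for all $x\in X\subseteq L$ then $\eta(\bigvee X)=u$; (I6) $\eta(x)\vee(y\wedge z)=(\eta(x)\vee y)\wedge(\eta(x)\vee z)$; (I7) the image $\eta(L)$ is the complete join subsemilattice of $L$ generated by the elements of $\eta(L)$ that are compact in $\mathbf L$; (I8) there is a compact element $w\in L$ with $\eta(w)=w$ such that the interval $[w,1]$ is isomorphic to the congruence lattice of a join semilattice with $0$. Define $\tau(x)=\bigvee\{z\in L:\eta(z)=\eta(x)\}$. A lattice is coatomic if every element $x<1$ lies below a coatom. $\mathbf L$ is bicoatomic if whenever $p$ is a coatom and $p\ge u\wedge v$ properly (i.e., $p\ge u\wedge v$ but $p\not\ge u$ and $p\not\ge v$), there exist coatoms $c\ge u$ and $d\ge v$ with $p\ge c\wedge d$. *)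

From Stdlib Require Import List.

Record CLat := {
  carrier :> Type;
  le : carrier -> carrier -> Prop;
  sup : (carrier -> Prop) -> carrier;
  le_refl : forall x, le x x;
  le_trans : forall x y z, le x y -> le y z -> le x z;
  le_antisym : forall x y, le x y -> le y x -> x = y;
  sup_ub : forall (X : carrier -> Prop) x, X x -> le x (sup X);
  sup_least : forall (X : carrier -> Prop) u,
      (forall x, X x -> le x u) -> le (sup X) u
}.

Arguments le {c} _ _.
Arguments sup {c} _.

Section Ops.
Variable L : CLat.

Definition join (x y : L) : L := sup (fun z => z = x \/ z = y).
Definition meet (x y : L) : L := sup (fun z => le z x /\ le z y).
Definition top : L := sup (fun _ => True).

Definition compact (c : L) : Prop :=
  forall X : L -> Prop, le c (sup X) ->
    exists l : list L, (forall y, In y l -> X y) /\ le c (sup (fun y => In y l)).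

Definition algebraic : Prop :=
  forall x : L, x = sup (fun c => compact c /\ le c x).

Definition coatom (p : L) : Prop :=
  p <> top /\ forall y : L, le p y -> y = p \/ y = top.

Definition coatomic : Prop :=
  forall x : L, x <> top -> exists p, coatom p /\ le x p.

Definition bicoatomic : Prop :=
  forall p u v : L, coatom p -> le (meet u v) p -> ~ le u p -> ~ le v p ->
    exists c d : L, coatom c /\ coatom d /\ le u c /\ le v d /\ le (meet c d) p.

Definition tau (eta : L -> L) (x : L) : L := sup (fun z => eta z = eta x).

End Ops.

Arguments join {L} _ _.
Arguments meet {L} _ _.
Arguments top {L}.
Arguments compact {L} _.
Arguments coatom {L} _.
Arguments tau {L} _ _.

Record JSL0 := {
  jcar :> Type;
  jop : jcar -> jcar -> jcar;
  jzero : jcar;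
  jop_assoc : forall a b c, jop a (jop b c) = jop (jop a b) c;
  jop_comm : forall a b, jop a b = jop b a;
  jop_idem : forall a, jop a a = a;
  jop_zero : forall a, jop jzero a = a
}.

Definition congruence (S : JSL0) (R : S -> S -> Prop) : Prop :=
  (forall a, R a a) /\ (forall a b, R a b -> R b a) /\
  (forall a b c, R a b -> R b c -> R a c) /\
  (forall a b c d, R a b -> R c d -> R (jop S a c) (jop S b d)).

Definition rel_incl {S : Type} (R1 R2 : S -> S -> Prop) : Prop :=
  forall a b, R1 a b -> R2 a b.

Definition interval_iso_Con (L : CLat) (w : L) (S : JSL0) : Prop :=
  exists f : L -> (S -> S -> Prop),
    (forall y, le w y -> congruence S (f y)) /\
    (forall y1 y2, le w y1 -> le w y2 -> (le y1 y2 <-> rel_incl (f y1) (f y2))) /\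
    (forall R, congruence S R -> exists y, le w y /\ rel_incl (f y) R /\ rel_incl R (f y)).

Definition equa_interior (L : CLat) (eta : L -> L) : Prop :=
  (forall x, le (eta x) x) /\
  (forall x y, le y x -> le (eta y) (eta x)) /\
  (forall x, eta (eta x) = eta x) /\
  eta top = top /\
  (forall (X : L -> Prop) (u : L), (exists x, X x) ->
      (forall x, X x -> eta x = u) -> eta (sup X) = u) /\
  (forall x y z, join (eta x) (meet y z) = meet (join (eta x) y) (join (eta x) z)) /\
  (forall y : L, (exists x, eta x = y) <->
      exists X : L -> Prop,
        (forall g, X g -> (exists x, eta x = g) /\ compact g) /\ y = sup X) /\
  (exists w : L, compact w /\ eta w = w /\ exists S : JSL0, interval_iso_Con L w S).

(* Fix the coatom p and put e := eta p; since p is a coatom, tau p = p.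
   Replacing u, v by e \/ u and e \/ v keeps their meet below p, by (I6).
   Take coatoms c >= tau (e \/ u) and d >= tau (e \/ v).  Condition (dagger),
   applied to x := e \/ u and z := c /\ (e \/ v), gives
   eta (eta z \/ p) <= c < 1, so eta z <= p; as e <= z this forces
   eta z = e, hence z <= tau z = tau p = p.  A second application, now with
   d in place of c and c in place of e \/ u, gives c /\ d <= p. *)

From Stdlib Require Import Classical.

Section LatticeFacts.
Variable L : CLat.

Lemma le_top (x : L) : le x top.
Proof. apply sup_ub; exact I. Qed.

Lemma top_le_eq (x : L) : le top x -> x = top.
Proof. intro H; apply le_antisym; [apply le_top | exact H]. Qed.

Lemma join_l (x y : L) : le x (join x y).
Proof. apply sup_ub; auto. Qed.

Lemma join_r (x y : L) : le y (join x y).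
Proof. apply sup_ub; auto. Qed.

Lemma join_least (x y z : L) : le x z -> le y z -> le (join x y) z.
Proof. intros; apply sup_least; intros w [-> | ->]; auto. Qed.

Lemma meet_l (x y : L) : le (meet x y) x.
Proof. apply sup_least; intros w [H _]; exact H. Qed.

Lemma meet_r (x y : L) : le (meet x y) y.
Proof. apply sup_least; intros w [_ H]; exact H. Qed.

Lemma meet_glb (x y z : L) : le z x -> le z y -> le z (meet x y).
Proof. intros; apply sup_ub; auto. Qed.

Lemma meet_comm (x y : L) : meet x y = meet y x.
Proof. apply le_antisym; apply meet_glb; (apply meet_r || apply meet_l). Qed.

Lemma meet_topl (x : L) : meet top x = x.
Proof.
  apply le_antisym; [apply meet_r | apply meet_glb; [apply le_top | apply le_refl]].
Qed.

Lemma meet_meet_r_of_le (u c v : L) : le u c -> meet u (meet c v) = meet u v.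
Proof.
  intro Huc; apply le_antisym; apply meet_glb.
  - apply meet_l.
  - eapply le_trans; apply meet_r.
  - apply meet_l.
  - apply meet_glb; [eapply le_trans; [apply meet_l | exact Huc] | apply meet_r].
Qed.

Lemma coatom_join_top (p a : L) : coatom p -> ~ le a p -> join a p = top.
Proof.
  intros [_ Hmax] Hap.
  destruct (Hmax (join a p) (join_r a p)) as [E | E]; [| exact E].
  exfalso; apply Hap; rewrite <- E; apply join_l.
Qed.

End LatticeFacts.


Section EquaInterior.
Variable L : CLat.
Variable eta : L -> L.
Hypothesis eta_le : forall x, le (eta x) x.
Hypothesis eta_mono : forall x y, le y x -> le (eta y) (eta x).
Hypothesis eta_idem : forall x, eta (eta x) = eta x.
Hypothesis eta_top : eta top = top.
Hypothesis eta_sup_const : forall (X : L -> Prop) (u : L), (exists x, X x) ->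
  (forall x, X x -> eta x = u) -> eta (sup X) = u.
Hypothesis eta_join_distr : forall x y z : L,
  join (eta x) (meet y z) = meet (join (eta x) y) (join (eta x) z).

Lemma le_tau (x : L) : le x (tau eta x).
Proof. apply sup_ub; reflexivity. Qed.

Lemma tau_eq (x y : L) : eta x = eta y -> tau eta x = tau eta y.
Proof. intro E; unfold tau; rewrite E; reflexivity. Qed.

Lemma eta_tau (x : L) : eta (tau eta x) = eta x.
Proof. apply eta_sup_const; [exists x; reflexivity | auto]. Qed.

Lemma tau_eq_top (x : L) : tau eta x = top -> x = top.
Proof.
  intro E; apply top_le_eq.
  rewrite <- eta_top, <- E, eta_tau; apply eta_le.
Qed.

Lemma tau_coatom (p : L) : coatom p -> tau eta p = p.
Proof.
  intros [Hpt Hmax].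
  destruct (Hmax (tau eta p) (le_tau p)) as [E | E]; [exact E |].
  exfalso; apply Hpt, tau_eq_top, E.
Qed.

Lemma eta_eq_of_sandwich (p y : L) : le (eta p) y -> le (eta y) p -> eta y = eta p.
Proof.
  intros Hpy Hyp; apply le_antisym.
  - rewrite <- (eta_idem y); apply eta_mono, Hyp.
  - rewrite <- (eta_idem p); apply eta_mono, Hpy.
Qed.

Lemma le_coatom_of_sandwich (p y : L) :
  coatom p -> le (eta p) y -> le (eta y) p -> le y p.
Proof.
  intros Hp Hpy Hyp.
  rewrite <- (tau_coatom p Hp), <- (tau_eq _ _ (eta_eq_of_sandwich p y Hpy Hyp)).
  apply le_tau.
Qed.

Hypothesis dagger : forall x z c : L,
  le (tau eta x) (tau eta c) -> le (eta z) c ->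
  le (eta (join (eta z) (tau eta (meet x z)))) c.

Lemma meet_le_coatom_transfer (p u v c : L) :
  coatom p -> c <> top -> le (tau eta u) (tau eta c) -> le u c ->
  le (eta p) u -> le (eta p) v -> le (meet u v) p -> le (meet c v) p.
Proof.
  intros Hp Hct Htau Huc Hpu Hpv Huv.
  set (y := meet c v).
  assert (Hpy : le (eta p) y).
  { apply meet_glb; [eapply le_trans; [exact Hpu | exact Huc] | exact Hpv]. }
  assert (Hup : le (eta p) (meet u v)) by (apply meet_glb; assumption).
  assert (Htau_uv : tau eta (meet u v) = p).
  { rewrite (tau_eq _ p); [apply tau_coatom, Hp |].
    apply eta_eq_of_sandwich; [exact Hup | eapply le_trans; [apply eta_le | exact Huv]]. }
  pose proof (dagger u y c Htau (le_trans _ _ _ _ (eta_le y) (meet_l _ _ _))) as Hc.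
  unfold y in Hc; rewrite meet_meet_r_of_le, Htau_uv in Hc by exact Huc; fold y in Hc.
  apply le_coatom_of_sandwich; [exact Hp | exact Hpy |].
  apply NNPP; intro Hyp.
  apply Hct, top_le_eq.
  rewrite <- eta_top, <- (coatom_join_top L p (eta y) Hp Hyp); exact Hc.
Qed.

Lemma bicoatomic_of_dagger : coatomic L -> bicoatomic L.
Proof.
  intros Hco p u v Hp Huv Hu Hv.
  set (u' := join (eta p) u); set (v' := join (eta p) v).
  assert (Huv' : le (meet u' v') p).
  { unfold u', v'; rewrite <- eta_join_distr.
    apply join_least; [apply eta_le | exact Huv]. }
  assert (Hu' : ~ le u' p) by (intro H; apply Hu; eapply le_trans; [apply join_r | exact H]).
  assert (Hv' : ~ le v' p) by (intro H; apply Hv; eapply le_trans; [apply join_r | exact H]).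
  assert (Htau_ne : forall a b, le (meet a b) p -> ~ le b p -> tau eta a <> top).
  { intros a b Hab Hb Ha; apply tau_eq_top in Ha; subst a.
    rewrite meet_topl in Hab; exact (Hb Hab). }
  destruct (Hco _ (Htau_ne u' v' Huv' Hv')) as [c [Hc Htc]].
  rewrite meet_comm in Huv'.
  destruct (Hco _ (Htau_ne v' u' Huv' Hu')) as [d [Hd Htd]].
  assert (Huc : le u' c) by (eapply le_trans; [apply le_tau | exact Htc]).
  assert (Hvd : le v' d) by (eapply le_trans; [apply le_tau | exact Htd]).
  assert (Hcv' : le (meet c v') p).
  { rewrite meet_comm in Huv'.
    apply (meet_le_coatom_transfer p u'); try apply join_l; try assumption.
    - apply Hc.
    - eapply le_trans; [exact Htc | apply le_tau]. }
  assert (Hdc : le (meet d c) p).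
  { rewrite meet_comm in Hcv'.
    apply (meet_le_coatom_transfer p v'); try apply join_l; try assumption.
    - apply Hd.
    - eapply le_trans; [exact Htd | apply le_tau].
    - eapply le_trans; [apply join_l | exact Huc]. }
  exists c, d; split; [exact Hc |]; split; [exact Hd |]; split; [| split].
  - eapply le_trans; [apply join_r | exact Huc].
  - eapply le_trans; [apply join_r | exact Hvd].
  - rewrite meet_comm; exact Hdc.
Qed.

End EquaInterior.

Theorem theorem6p2 (L : CLat) (eta : L -> L) :
  algebraic L -> coatomic L -> equa_interior L eta ->
  (forall x z c : L, le (tau eta x) (tau eta c) -> le (eta z) c ->
     le (eta (join (eta z) (tau eta (meet x z)))) c) ->
  bicoatomic L.
Proof.
  intros _ Hco [I1 [I2 [I3 [I4 [I5 [I6 _]]]]]] Hdagger.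
  exact (bicoatomic_of_dagger L eta I1 I2 I3 I4 I5 I6 Hdagger Hco).
Qed.
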